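(* Let $\beta$ be a primitive $2p$-th root of unity in $\mathbb{F}_q$, let $\eta_0=\sum_{i\in D_0^{(p)}}\beta^{2i}$, $\eta_1=\sum_{i\in D_1^{(p)}}\beta^{2i}$, and let $S(x)$ be the generating polynomial of the sequence $s$, viewed in $\mathbb{F}_q[x]$. Then, with integers interpreted in $\mathbb{F}_q$ via the canonical map $\mathbb{Z}\to\mathbb{F}_q$: (1) if $p\equiv\pm1\pmod 8$, $$S(\beta^k)=\begin{cases} p, & k=0,\\ 1, & k\in D_0^{(2p)}\cup D_1^{(2p)}\cup\{p\},\\ 1+2\eta_1, & k\in 2D_0^{(p)},\\ 1+2\eta_0, & k\in 2D_1^{(p)};\end{cases}$$ (2) if $p\equiv\pm3\pmod 8$, $$S(\beta^k)=\begin{cases} p, & k=0,\\ 1, & k=p,\\ -2\eta_0, & k\in D_0^{(2p)},\\ -2\eta_1, & k\in D_1^{(2p)},\\ 0, & k\in 2D_0^{(p)}\cup 2D_1^{(p)}.\end{cases}$$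
   Context: Let $p$ be an odd prime and $g$ an odd integer which is a primitive root modulo $p$ and modulo $2p$. Define $D_0^{(p)}=\{g^{2k}\bmod p : 0\le k\le \frac{p-1}{2}-1\}$, $D_1^{(p)}=\{g^{2k+1}\bmod p : 0\le k\le \frac{p-1}{2}-1\}$, $D_0^{(2p)}=\{g^{2k}\bmod 2p : 0\le k\le \frac{p-1}{2}-1\}$, $D_1^{(2p)}=\{g^{2k+1}\bmod 2p : 0\le k\le \frac{p-1}{2}-1\}$, viewed as subsets of $\{0,\dots,p-1\}$ resp. $\mathbb{Z}_{2p}=\{0,1,\dots,2p-1\}$. For $j\in\{0,1\}$ let $2D_j^{(p)}=\{2a \bmod 2p : a\in D_j^{(p)}\}\subseteq \mathbb{Z}_{2p}$. Then $\mathbb{Z}_{2p}$ is the disjoint union of $D_0^{(2p)},D_1^{(2p)},2D_0^{(p)},2D_1^{(p)},\{p\},\{0\}$. Let $C_1=D_1^{(2p)}\cup 2D_1^{(p)}\cup\{0\}$ and $C_0=D_0^{(2p)}\cup 2D_0^{(p)}\cup\{p\}$. The binary sequence $s=(s_i)_{i\ge 0}$ of period $2p$ is defined by $s_i=1$ if $i\bmod 2p\in C_1$ and $s_i=0$ if $i\bmod 2p\in C_0$. Its generating polynomial is $S(x)=\sum_{i=0}^{2p-1}s_ix^i=1+\sum_{i\in D_1^{(2p)}}x^i+\sum_{i\in 2D_1^{(p)}}x^i$. Let $r\ge 5$ be a prime with $r\ne p$, $m$ the multiplicative order of $r$ modulo $p$, and $q=r^m$ (so $2p\mid q-1$). *)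

From HB Require Import structures.
From mathcomp Require Import all_boot all_order all_algebra all_field.
Set Implicit Arguments. Unset Strict Implicit. Unset Printing Implicit Defensive.
Import GRing.Theory.

Definition eqmodz (n : nat) (a b : int) : bool :=
  (modz a (Posz n) == modz b (Posz n)).

Definition primroot_mod (n : nat) (g : int) : bool :=
  eqmodz n (g ^+ totient n)%R 1 &&
  [forall k : 'I_(totient n), (0 < (k : nat))%N ==> ~~ eqmodz n (g ^+ k)%R 1].

Definition is_ord_mod (p r m : nat) : Prop :=
  (0 < m)%N /\ r ^ m = 1 %[mod p] /\
  (forall k, (0 < k < m)%N -> r ^ k <> 1 %[mod p]).

Definition resz (n : nat) (a : int) : nat := absz (modz a (Posz n)).

Definition Dset (p n j : nat) (g : int) : seq nat :=
  [seq resz n (g ^+ (2 * k + j))%R | k <- iota 0 (p.-1)./2].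

Definition twoD (p j : nat) (g : int) : seq nat :=
  [seq (2 * a) %% (2 * p) | a <- Dset p p j g].

Definition C1 (p : nat) (g : int) : seq nat :=
  0 :: Dset p (2 * p) 1 g ++ twoD p 1 g.

Definition sseq (p : nat) (g : int) (i : nat) : bool :=
  (i %% (2 * p)) \in C1 p g.

Definition Spoly (R : nzRingType) (p : nat) (g : int) : {poly R} :=
  (\poly_(i < 2 * p) ((sseq p g i)%:R : R))%R.

Definition eta_sum (F : fieldType) (p j : nat) (g : int) (beta : F) : F :=
  (\sum_(i < p | (i : nat) \in Dset p p j g) beta ^+ (2 * i))%R.

(* Write h = (p-1)/2, G for the image of g in F_p (a generator of the
   multiplicative group of F_p) and w(z) = beta^(2z) for the additive
   character of F_p. For x = beta^i with
   i = g^e mod 2p (odd) or i = 2 (g^e mod p), every term x^j of S(x) becomes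
   +-w(c * G^(2k+1)) for a suitable c in F_p, using beta^p = -1 and, for odd
   exponents n, beta^n = -w(n/2). Hence S(beta^i) is 1 plus two "periods"
   P(c) = sum_(k<h) w(c G^(2k)). A period only depends on the class of c
   modulo the squares, i.e. on the sign c^h = +-1, so it equals the Gauss
   period eta_0 or eta_1, and eta_0 + eta_1 = -1 because w sums to 0.
   The remaining sign is that of 2 (and of 1/2), given by Gauss's lemma:
   2^h = 1 iff p = +-1 mod 8. *)

From HB Require Import structures.
From mathcomp Require Import all_boot all_order all_algebra all_field zify ring.
Import GRing.Theory.
Set Implicit Arguments. Unset Strict Implicit. Unset Printing Implicit Defensive.
Local Open Scope ring_scope.

Section HalfPeriods.
Variables (K : fieldType) (V : nmodType) (G : K) (h : nat).
Hypothesis G_prim : (2 * h).-primitive_root G.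

Lemma h_gt0 : (0 < h)%N.
Proof. by have := prim_order_gt0 G_prim; rewrite muln_gt0 => /andP[]. Qed.

Lemma prim_half_neq1 : G ^+ h != 1.
Proof.
rewrite -(expr0 G) (eq_prim_root_expr G_prim) mod0n modn_small.
  by rewrite -lt0n h_gt0.
by have := h_gt0; lia.
Qed.

(* G^h is a square root of 1 other than 1, hence -1. *)
Lemma prim_half : G ^+ h = -1.
Proof.
have : (G ^+ h) ^+ 2 == 1 by rewrite -exprM mulnC prim_expr_order.
by rewrite sqrf_eq1 (negPf prim_half_neq1) => /eqP.
Qed.

(* Since -1 = G^h != 1, a sign (-1)^b determines b. *)
Lemma sign_inj (a b : bool) : (-1) ^+ a = (-1) ^+ b :> K -> a = b.
Proof.
have m1_neq1 : (-1 : K) != 1 by rewrite -prim_half prim_half_neq1.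
by case: a b => [] [] // /eqP; rewrite ?expr1 ?expr0 ?(negPf m1_neq1) // eq_sym (negPf m1_neq1).
Qed.

Lemma prim_sign t : (G ^+ t) ^+ h = (-1) ^+ odd t.
Proof. by rewrite exprAC prim_half signr_odd. Qed.

Definition period (f : K -> V) (z : K) : V := \sum_(k < h) f (z * G ^+ (2 * k)).

Lemma period_rot f z : period f (z * G ^+ 2) = period f z.
Proof.
rewrite /period; case: h G_prim => [|h'] Gp; first by rewrite !big_ord0.
have Gh : G ^+ (2 * h'.+1) = 1 by exact: prim_expr_order.
rewrite big_ord_recr big_ord_recl /= addrC -mulrA -exprD -mulnS Gh muln0 expr0.
by congr (_ + _); apply: eq_bigr => k _; rewrite -mulrA -exprD -mulnS.
Qed.

Lemma period_shift f z s : period f (z * G ^+ (2 * s)) = period f z.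
Proof.
elim: s z => [|s IHs] z; first by rewrite muln0 expr0 mulr1.
by rewrite mulnS exprD mulrA IHs period_rot.
Qed.

(* The period of z only depends on the coset of z modulo the squares, which
   is detected by the sign z^h. *)
Lemma period_sign f z (b : bool) : z ^+ h = (-1) ^+ b -> period f z = period f (G ^+ b).
Proof.
move=> zh.
have [i zi] : {i : 'I_(2 * h) | z = G ^+ i}.
  by apply: (prim_rootP G_prim); rewrite mulnC exprM zh sqrr_sign.
rewrite zi {1}(divn_eq i 2) modn2 mulnC exprD mulrC period_shift.
by move: zh; rewrite zi prim_sign => /sign_inj ->.
Qed.

End HalfPeriods.

Lemma sum_even_odd (V : nmodType) (F : nat -> V) n :
  \sum_(i < 2 * n) F i = \sum_(k < n) F (2 * k)%N + \sum_(k < n) F (2 * k + 1)%N.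
Proof.
elim: n => [|n IHn]; first by rewrite !big_ord0 addr0.
rewrite (_ : 2 * n.+1 = (2 * n).+2)%N; last by rewrite mulnS addnC addn2.
by rewrite !big_ord_recr /= IHn -!addrA addn1 (addrCA (F (2 * n)%N)).
Qed.

(* In a finite field with 2h+1 elements generated by G, the two cosets of the
   squares partition the nonzero elements, so the two periods add up to the
   sum of f over all nonzero elements. *)
Lemma periods_total (K : finFieldType) (V : nmodType) (G : K) h (f : K -> V) :
  (2 * h).-primitive_root G -> #|K| = (2 * h).+1 ->
  period G h f 1 + period G h f G = \sum_(z | z != 0) f z.
Proof.
move=> G_prim cardK.
have pow_inj : injective (fun i : 'I_(2 * h) => G ^+ i).
  move=> i j /eqP; rewrite (eq_prim_root_expr G_prim) !modn_small //.
  by move/eqP/val_inj.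
have powers : [set G ^+ (i : nat) | i : 'I_(2 * h)] = [set~ 0].
  apply/eqP; rewrite eqEcard cardsC1 cardK card_imset // card_ord leqnn andbT.
  apply/subsetP => _ /imsetP[i _ ->]; rewrite !inE expf_neq0 //.
  by rewrite (prim_root_eq0 G_prim) -lt0n (prim_order_gt0 G_prim).
rewrite (eq_bigl (mem [set~ 0])); last by move=> z; rewrite !inE.
rewrite -powers big_imset /=; last by move=> i j _ _ /pow_inj.
rewrite (eq_bigl xpredT) // (sum_even_odd (fun i => f (G ^+ i))) /period.
by congr (_ + _); apply: eq_bigr => k _; rewrite ?mul1r // -exprS addn1.
Qed.

Lemma resz_Fp (p n : nat) (a : int) : prime p -> (0 < n)%N -> (p %| n)%N ->
  (a%:~R : 'F_p) = (resz n a)%:R.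
Proof.
move=> p_pr n_gt0 p_dvd_n.
rewrite {1}(divz_eq a n) intrD intrM /=.
have -> : (n%:~R : 'F_p) = 0.
  by apply/eqP; rewrite -pmulrn -(dvdn_pcharf (pchar_Fp p_pr)).
rewrite mulr0 add0r /resz pmulrn gez0_abs // modz_ge0 // eqz_nat -lt0n //.
Qed.

Lemma resz_lt (n : nat) (a : int) : (0 < n)%N -> (resz n a < n)%N.
Proof. by move=> n_gt0; rewrite /resz; lia. Qed.

Lemma resz_odd (n : nat) (a : int) : (0 < n)%N -> odd `|a|%N -> odd (resz (2 * n) a).
Proof.
move=> n_gt0 a_odd; rewrite /resz.
have r_ge0 : (0 <= (a %% (2 * n)%N)%Z) by rewrite modz_ge0 // eqz_nat; lia.
have a_eq : a = (a %/ (2 * n)%N)%Z * n%:Z * 2 + (a %% (2 * n)%N)%Z.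
  by rewrite {1}(divz_eq a (2 * n)%N) PoszM; ring.
move: a_odd r_ge0; rewrite {1}a_eq.
move: (a %/ _)%Z (a %% _)%Z => q r.
lia.
Qed.

Lemma eqmodz_Fp (p : nat) (a b : int) : prime p ->
  eqmodz p a b = ((a%:~R : 'F_p) == b%:~R).
Proof.
move=> p_pr; have p_gt0 := prime_gt0 p_pr.
rewrite !(resz_Fp _ p_pr p_gt0 (dvdnn p)) -val_eqE /= !val_Fp_nat //.
rewrite !modn_small ?resz_lt // /eqmodz /resz -eqz_nat.
by rewrite !gez0_abs // modz_ge0 // eqz_nat -lt0n.
Qed.

Lemma primroot_Fp (p : nat) (g : int) : prime p -> primroot_mod p g ->
  (p.-1).-primitive_root (g%:~R : 'F_p).
Proof.
move=> p_pr /andP[g_order /forallP g_min]; rewrite totient_prime // in g_order g_min.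
have p1_gt0 : (0 < p.-1)%N by rewrite -subn1 subn_gt0 prime_gt1.
have g_pow : (g%:~R : 'F_p) ^+ p.-1 = 1.
  by apply/eqP; move: g_order; rewrite eqmodz_Fp // rmorphXn.
have [m g_prim m_dvd] := prim_order_exists p1_gt0 g_pow.
suff <- : m = p.-1 by [].
apply/eqP; rewrite eqn_leq dvdn_leq //= leqNgt; apply/negP => m_lt.
have := g_min (Ordinal m_lt); rewrite /= (prim_order_gt0 g_prim) eqmodz_Fp //.
by rewrite rmorphXn /= (prim_expr_order g_prim) eqxx.
Qed.

Section GaussTwo.
Variables (p h : nat).
Hypotheses (p_pr : prime p) (p_eq : p = (2 * h).+1).

(* Gauss's lemma for 2: the i-th even number 2(i+1) is congruent modulo p to
   +-(fold i + 1), where fold i + 1 in [1, h] and fold is a permutation of [0, h). *)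
Definition fold (i : nat) : nat :=
  if (2 * i.+1 <= h)%N then (2 * i).+1 else (p - 2 * i.+1).-1.

Lemma fold_lt (i : 'I_h) : (fold i < h)%N.
Proof. by case: i => i /=; rewrite /fold; case: ifP; lia. Qed.

Lemma fold_inj : injective (fun i : 'I_h => Ordinal (fold_lt i)).
Proof.
move=> [i ih] [j jh] /(congr1 val) /=; rewrite /fold => e; apply/val_inj => /=.
by move: e; case: ifP; case: ifP; lia.
Qed.

Lemma even_fold (i : nat) : (i < h)%N ->
  ((2 * i.+1)%N%:R : 'F_p) = (if (h < 2 * i.+1)%N then -1 else 1) * (fold i).+1%:R.
Proof.
move=> ih; rewrite /fold; case: leqP => small; first by rewrite mul1r; congr _%:R; lia.
rewrite mulN1r (_ : (p - 2 * i.+1).-1.+1 = p - 2 * i.+1)%N; last by lia.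
by rewrite natrB ?(pchar_Fp_0 p_pr) ?sub0r ?opprK //; lia.
Qed.

(* Comparing prod 2(i+1) = 2^h h! with prod +-(fold i + 1) = +-h! gives
   2^h = (-1)^(number of i < h with 2(i+1) > h). *)
Lemma gauss_two : (2%:R : 'F_p) ^+ h = (-1) ^+ (h - h %/ 2).
Proof.
pose fact := \prod_(i < h) ((i.+1)%:R : 'F_p).
have fact_neq0 : fact != 0.
  apply/prodf_neq0 => i _; rewrite -(dvdn_pcharf (pchar_Fp p_pr)).
  by apply/negP => /dvdn_leq; have := ltn_ord i; lia.
have evens_pow : \prod_(i < h) ((2 * i.+1)%N%:R : 'F_p) = 2%:R ^+ h * fact.
  rewrite (eq_bigr (fun i : 'I_h => 2%:R * (i.+1)%:R)) => [|i _]; last by rewrite natrM.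
  by rewrite big_split /= prodr_const card_ord.
have evens_sign : \prod_(i < h) ((2 * i.+1)%N%:R : 'F_p) =
    \prod_(i < h) (if (h < 2 * i.+1)%N then -1 else 1) * fact.
  rewrite /fact [X in _ = _ * X](reindex_inj fold_inj) -big_split /=.
  by apply: eq_bigr => i _; rewrite (even_fold (ltn_ord i)).
have signs : \prod_(i < h) (if (h < 2 * i.+1)%N then -1 else 1) = (-1) ^+ (h - h %/ 2) :> 'F_p.
  rewrite -(big_mkord xpredT (fun i => if (h < 2 * i.+1)%N then -1 else 1)).
  rewrite (big_cat_nat (n := (h %/ 2)%N)) //=; last by lia.
  rewrite big_nat_cond big1 ?mul1r; last by move=> i /andP[/andP[_ ih] _]; case: ifP => //; lia.
  rewrite big_nat_cond (eq_bigr (fun _ => -1)); last by move=> i /andP[/andP[ih _] _]; case: ifP => //; lia.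
  by rewrite -big_nat_cond prodr_const_nat.
by apply: (mulIf fact_neq0); rewrite -evens_pow evens_sign signs.
Qed.

End GaussTwo.

(* The second supplement to quadratic reciprocity (Euler's criterion form):
   2 is a square modulo p iff p = +-1 mod 8. *)
Lemma two_pow_half (p : nat) : prime p -> odd p ->
  (2%:R : 'F_p) ^+ (p.-1)./2 = (-1) ^+ ((p %% 8 == 3) || (p %% 8 == 5))%N.
Proof.
move=> p_pr p_odd; rewrite (@gauss_two p) //; last by lia.
by rewrite -signr_odd; congr (_ ^+ _); lia.
Qed.

Lemma sum_ord_mem (V : nmodType) (n : nat) (s : seq nat) (F : nat -> V) :
  uniq s -> all (fun i => i < n)%N s ->
  \sum_(i < n | (i : nat) \in s) F i = \sum_(i <- s) F i.
Proof.
move=> s_uniq s_lt; rewrite -(big_mkord (mem s)) -big_filter.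
apply: perm_big; apply: uniq_perm; rewrite ?filter_uniq ?iota_uniq // => i.
rewrite mem_filter mem_iota /= add0n subn0.
by case: (boolP (i \in s)) => //= /(allP s_lt).
Qed.

Lemma sum_iota_ord (V : nmodType) (F : nat -> V) n :
  \sum_(k <- iota 0 n) F k = \sum_(k < n) F k.
Proof. by rewrite -(big_mkord xpredT) /index_iota subn0. Qed.

Section Sequence.
Variables (p : nat) (g : int).
Hypotheses (p_pr : prime p) (p_odd : odd p) (g_odd : odd `|g|%N).
Hypothesis g_prim : primroot_mod p g.

Local Notation h := (p.-1)./2.
Local Notation G := (g%:~R : 'F_p).

Lemma p_eq : p = (2 * h).+1.
Proof. by have := prime_gt1 p_pr; lia. Qed.

Lemma double_p_gt0 : (0 < 2 * p)%N.
Proof. by have := prime_gt0 p_pr; lia. Qed.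

Lemma G_prim : (2 * h).-primitive_root G.
Proof. by rewrite (_ : 2 * h = p.-1)%N ?primroot_Fp //; have := p_eq; lia. Qed.

Definition resp (e : nat) : nat := resz p (g ^+ e).
Definition res2p (e : nat) : nat := resz (2 * p) (g ^+ e).

Lemma resn_Fp n e : (0 < n)%N -> (p %| n)%N -> ((resz n (g ^+ e))%:R : 'F_p) = G ^+ e.
Proof. by move=> n_gt0 p_dvd_n; rewrite -resz_Fp // rmorphXn. Qed.

Lemma resp_Fp e : ((resp e)%:R : 'F_p) = G ^+ e.
Proof. exact: resn_Fp (prime_gt0 p_pr) (dvdnn p). Qed.

Lemma res2p_Fp e : ((res2p e)%:R : 'F_p) = G ^+ e.
Proof. exact: resn_Fp double_p_gt0 (dvdn_mull 2 (dvdnn p)). Qed.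

Lemma resp_lt e : (resp e < p)%N.
Proof. exact/resz_lt/prime_gt0. Qed.

Lemma res2p_lt e : (res2p e < 2 * p)%N.
Proof. exact: resz_lt double_p_gt0. Qed.

Lemma res2p_odd e : odd (res2p e).
Proof. by apply: resz_odd; rewrite ?prime_gt0 // abszX oddX g_odd orbT. Qed.

Lemma resp_gt0 e : (0 < resp e)%N.
Proof.
have G_neq0 : G != 0 by rewrite (prim_root_eq0 G_prim); have := prime_gt1 p_pr; lia.
rewrite lt0n; apply/eqP => resp0; have := resp_Fp e; rewrite resp0 => /esym/eqP.
by rewrite expf_eq0 (negPf G_neq0) andbF.
Qed.

Lemma G_pow_inj j a b : (a < h)%N -> (b < h)%N ->
  G ^+ (2 * a + j) = G ^+ (2 * b + j) -> a = b.
Proof.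
move=> ah bh /eqP; rewrite (eq_prim_root_expr G_prim) eqn_modDr.
by rewrite !modn_small ?ltn_pmul2l // eqn_pmul2l // => /eqP.
Qed.

Lemma Dset_uniq n j : (0 < n)%N -> (p %| n)%N -> uniq (Dset p n j g).
Proof.
move=> n_gt0 p_dvd_n; rewrite map_inj_in_uniq ?iota_uniq // => a b.
rewrite !mem_iota !add0n => /andP[_ ah] /andP[_ bh] /(congr1 (fun x => x%:R : 'F_p)).
by rewrite /= !resn_Fp //; apply: G_pow_inj.
Qed.

Lemma Dset_mem n j x : x \in Dset p n j g ->
  exists2 k, (k < h)%N & x = resz n (g ^+ (2 * k + j)).
Proof. by case/mapP => k; rewrite mem_iota add0n => /andP[_ kh] ->; exists k. Qed.

Lemma twoD_mem j x : x \in twoD p j g -> exists2 k, (k < h)%N & x = (2 * resp (2 * k + j))%N.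
Proof.
case/mapP => _ /Dset_mem[k kh ->] ->; exists k => //.
by rewrite modn_small // ltn_pmul2l // resp_lt.
Qed.

(* The support C_1 of one period of s is a duplicate-free list of indices
   below 2p: 0, the odd residues D_1^(2p), and the even residues 2D_1^(p). *)
Lemma C1_uniq : uniq (C1 p g).
Proof.
have D_odd x : x \in Dset p (2 * p) 1 g -> odd x by case/Dset_mem => k _ ->; apply: res2p_odd.
have twoD_even x : x \in twoD p 1 g -> ~~ odd x && (0 < x)%N.
  by case/twoD_mem => k _ ->; rewrite oddM /= muln_gt0 resp_gt0.
rewrite /C1 cons_uniq cat_uniq mem_cat negb_or Dset_uniq ?double_p_gt0 ?dvdn_mull //=.
apply/and3P; split; first (apply/andP; split).
- by apply/negP => /D_odd.
- by apply/negP => /twoD_even; rewrite ltnn andbF.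
- by apply/hasPn => x /twoD_even /andP[x_even _]; apply: contra x_even => /D_odd.
- rewrite map_inj_in_uniq ?Dset_uniq ?prime_gt0 // => _ _ /Dset_mem[a _ ->] /Dset_mem[b _ ->].
  by rewrite !modn_small ?ltn_pmul2l ?resz_lt ?prime_gt0 // => /eqP; rewrite eqn_pmul2l // => /eqP.
Qed.

Lemma C1_lt : all (fun i => i < 2 * p)%N (C1 p g).
Proof.
apply/allP => x; rewrite inE mem_cat => /or3P[/eqP -> | /Dset_mem[k _ ->] | /twoD_mem[k _ ->]].
- exact: double_p_gt0.
- exact: res2p_lt.
- by rewrite ltn_pmul2l // resp_lt.
Qed.

Lemma Spoly_horner (R : nzRingType) (x : R) : (Spoly R p g).[x] =
  1 + \sum_(k < h) x ^+ res2p (2 * k + 1) + \sum_(k < h) x ^+ (2 * resp (2 * k + 1)).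
Proof.
rewrite horner_poly (eq_bigr (fun i : 'I_(2 * p) => if (i : nat) \in C1 p g then x ^+ i else 0)).
  rewrite -big_mkcond /= (sum_ord_mem (fun i => x ^+ i)) ?C1_uniq ?C1_lt //.
  rewrite big_cons expr0 big_cat /= addrA !big_map !sum_iota_ord; congr (_ + _).
  by apply: eq_bigr => k _; rewrite modn_small // ltn_pmul2l // resp_lt.
move=> i _; rewrite /sseq modn_small //.
by case: (_ \in _); rewrite ?mul1r ?mul0r.
Qed.


Section Evaluation.
Variables (K : fieldType) (beta : K).
Hypothesis beta_prim : (2 * p).-primitive_root beta.

Local Notation S := (Spoly K p g).

Lemma beta2_prim : p.-primitive_root (beta ^+ 2).
Proof. by have := exp_prim_root beta_prim 2; rewrite gcdnMr mulKn. Qed.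

Definition wchar (z : 'F_p) : K := beta ^+ (2 * z).

Lemma wchar_nat n : wchar n%:R = beta ^+ (2 * n).
Proof. by rewrite /wchar val_Fp_nat // !exprM (prim_expr_mod beta2_prim). Qed.

Lemma wchar_sum : \sum_(z : 'F_p) wchar z = 0.
Proof.
have beta2_neq1 : beta ^+ 2 != 1.
  rewrite -[beta ^+ 2]expr1 -(prim_order_dvd beta2_prim) dvdn1.
  by have := prime_gt1 p_pr; lia.
rewrite (eq_bigr (fun z : 'F_p => (beta ^+ 2) ^+ z)) => [|z _]; last by rewrite /wchar exprM.
have := subrX1 (beta ^+ 2) (Zp_trunc (pdiv p)).+2.
rewrite Fp_cast // (prim_expr_order beta2_prim) subrr => /esym/eqP.
by rewrite mulf_eq0 subr_eq0 (negPf beta2_neq1) /= => /eqP.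
Qed.

(* inv2 = (p + 1) / 2 is the inverse of 2 in F_p. *)
Definition inv2 : 'F_p := h.+1%:R.

Lemma two_inv2 : 2%:R * inv2 = 1.
Proof.
rewrite /inv2 -natrM (_ : 2 * h.+1 = p + 1)%N; last by have := p_eq; lia.
by rewrite natrD (pchar_Fp_0 p_pr) add0r.
Qed.

(* For odd n, beta^n = -beta^(n + p) = -beta^(2 (n/2 mod p)). *)
Lemma beta_odd n : odd n -> beta ^+ n = - wchar (n%:R * inv2).
Proof.
move=> n_odd; rewrite -natrM wchar_nat (_ : 2 * (n * h.+1) = n + p * n)%N; last first.
  by have := p_eq; nia.
by rewrite exprD exprM (prim_half beta_prim) -signr_odd n_odd mulrN1 opprK.
Qed.

Definition gauss_period (b : bool) : K := period G h wchar (G ^+ b).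

Lemma eta_sumE j : (j <= 1)%N -> eta_sum p j g beta = gauss_period (odd j).
Proof.
move=> j_le1; have Dp_lt : all (fun i => i < p)%N (Dset p p j g).
  by apply/allP => _ /Dset_mem[k _ ->]; apply: resp_lt.
rewrite /eta_sum (sum_ord_mem (fun i => beta ^+ (2 * i))) ?Dset_uniq ?prime_gt0 // big_map.
rewrite sum_iota_ord; apply: eq_bigr => k _; rewrite -wchar_nat resp_Fp exprD mulrC.
by case: j j_le1 {Dp_lt} => [|[|]] //.
Qed.

(* eta_0 + eta_1 is the sum of w over F_p^*, that is -w(0) = -1. *)
Lemma gauss_periods_sum b : gauss_period b + gauss_period (~~ b) = -1.
Proof.
wlog -> : b / b = false by case: b => sum_false; [rewrite addrC|]; apply: sum_false.
rewrite /gauss_period expr0 expr1 periods_total ?G_prim ?card_Fp -?p_eq //.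
have wchar0 : wchar 0 = 1 by rewrite /wchar muln0 expr0.
by have := wchar_sum; rewrite (bigD1 0) //= wchar0 => /eqP; rewrite addrC addr_eq0 => /eqP.
Qed.

(* S(1) counts the p elements of C_1. *)
Lemma S_at_0 : S.[beta ^+ 0] = p%:R.
Proof.
rewrite expr0 Spoly_horner.
under eq_bigr do rewrite expr1n.
under [X in _ + X]eq_bigr do rewrite expr1n.
rewrite !sumr_const card_ord -[1]/(1%:R) -!natrD.
by congr _%:R; have := p_eq; lia.
Qed.

(* At beta^p = -1 the h odd and the h even exponents cancel. *)
Lemma S_at_p : S.[beta ^+ p] = 1.
Proof.
rewrite Spoly_horner (prim_half beta_prim).
under eq_bigr do rewrite -signr_odd res2p_odd expr1.
under [X in _ + X]eq_bigr do rewrite exprM sqrrN !expr1n.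
by rewrite !sumr_const card_ord mulNrn subrK.
Qed.

(* S(beta^i) for i = g^e mod 2p: the exponents i * (g^(2k+1) mod 2p) are odd
   and give -w(G^(e+1) G^(2k) / 2), the others give w(G^(e+1) G^(2k)). *)
Lemma S_at_D_periods e : S.[beta ^+ res2p e] =
  1 - period G h wchar (G ^+ e.+1 * inv2) + period G h wchar (G ^+ e.+1).
Proof.
rewrite Spoly_horner; congr (1 + _ + _); rewrite /period -?sumrN; apply: eq_bigr => k _.
  rewrite -exprM beta_odd ?oddM ?res2p_odd // natrM !res2p_Fp.
  by rewrite addn1 !exprS; congr (- wchar _); ring.
rewrite -exprM mulnCA -wchar_nat natrM res2p_Fp resp_Fp.
by rewrite addn1 !exprS; congr wchar; ring.
Qed.

(* S(beta^i) for i = 2 (g^e mod p): all exponents are even. *)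
Lemma S_at_2D_periods e : S.[beta ^+ (2 * resp e)] =
  1 + period G h wchar (G ^+ e.+1) + period G h wchar (2%:R * G ^+ e.+1).
Proof.
rewrite Spoly_horner; congr (1 + _ + _); rewrite /period; apply: eq_bigr => k _.
  by rewrite -exprM -mulnA -wchar_nat natrM resp_Fp res2p_Fp addn1 !exprS; congr wchar; ring.
rewrite -exprM mulnCA -mulnA -wchar_nat !natrM !resp_Fp.
by rewrite addn1 !exprS; congr wchar; ring.
Qed.

Local Notation two_nonsq := ((p %% 8 == 3) || (p %% 8 == 5))%N.

Lemma inv2_pow : inv2 ^+ h = (-1) ^+ two_nonsq.
Proof.
rewrite -[LHS](signrMK two_nonsq) -{2}(two_pow_half p_pr p_odd).
by rewrite -exprMn two_inv2 expr1n mulr1.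
Qed.

(* The values of S at beta^i for i in D^(2p) and in 2D^(p), resolved by the
   quadratic characters of G^(e+1) and of 2. *)
Lemma S_at_D e : S.[beta ^+ res2p e] =
  if two_nonsq then - (2 * gauss_period (odd e)) else 1.
Proof.
have sign_inv2 : (G ^+ e.+1 * inv2) ^+ h = (-1) ^+ (~~ odd e (+) two_nonsq).
  by rewrite exprMn (prim_sign G_prim) inv2_pow oddS signr_addb.
rewrite S_at_D_periods (period_sign G_prim wchar sign_inv2).
rewrite (period_sign G_prim wchar (prim_sign G_prim e.+1)) oddS -!/(gauss_period _).
case: two_nonsq; rewrite ?addbF ?subrK // addbT negbK.
have := gauss_periods_sum (odd e).
move: (gauss_period (odd e)) (gauss_period (~~ odd e)) => eta eta' eta_sum1.
by rewrite (_ : eta' = -1 - eta); [ring | rewrite -eta_sum1; ring].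
Qed.

Lemma S_at_2D e : S.[beta ^+ (2 * resp e)] =
  if two_nonsq then 0 else 1 + 2 * gauss_period (~~ odd e).
Proof.
have sign_two : (2%:R * G ^+ e.+1) ^+ h = (-1) ^+ (two_nonsq (+) ~~ odd e).
  by rewrite exprMn (prim_sign G_prim) (two_pow_half p_pr p_odd) oddS signr_addb.
rewrite S_at_2D_periods (period_sign G_prim wchar sign_two).
rewrite (period_sign G_prim wchar (prim_sign G_prim e.+1)) oddS -!/(gauss_period _).
case: two_nonsq => /=; last by ring.
by rewrite -addrA gauss_periods_sum subrr.
Qed.

Lemma S_on_D j x : x \in Dset p (2 * p) j g ->
  S.[beta ^+ x] = if two_nonsq then - (2 * gauss_period (odd j)) else 1.
Proof. by case/Dset_mem => k _ ->; rewrite -/(res2p _) S_at_D oddD oddM. Qed.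

Lemma S_on_2D j x : x \in twoD p j g ->
  S.[beta ^+ x] = if two_nonsq then 0 else 1 + 2 * gauss_period (~~ odd j).
Proof. by case/twoD_mem => k _ ->; rewrite S_at_2D oddD oddM. Qed.

End Evaluation.
End Sequence.

Theorem lemma8 (p : nat) (g : int) (r m : nat) (F : finFieldType) (beta : F) :
  prime p -> odd p ->
  odd `|g|%N -> primroot_mod p g -> primroot_mod (2 * p) g ->
  prime r -> (5 <= r)%N -> r != p ->
  is_ord_mod p r m ->
  #|F| = (r ^ m)%N ->
  (2 * p)%N.-primitive_root beta ->
  let S := Spoly F p g in
  let eta0 := eta_sum p 0 g beta in
  let eta1 := eta_sum p 1 g beta in
  ((p %% 8 == 1)%N || (p %% 8 == 7)%N ->
   forall k : nat, (k < 2 * p)%N ->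
     (k = 0%N -> S.[beta ^+ k] = p%:R) /\
     ((k \in Dset p (2 * p) 0 g) || (k \in Dset p (2 * p) 1 g) || (k == p) ->
        S.[beta ^+ k] = 1) /\
     (k \in twoD p 0 g -> S.[beta ^+ k] = 1 + 2 * eta1) /\
     (k \in twoD p 1 g -> S.[beta ^+ k] = 1 + 2 * eta0))
  /\
  ((p %% 8 == 3)%N || (p %% 8 == 5)%N ->
   forall k : nat, (k < 2 * p)%N ->
     (k = 0%N -> S.[beta ^+ k] = p%:R) /\
     (k = p -> S.[beta ^+ k] = 1) /\
     (k \in Dset p (2 * p) 0 g -> S.[beta ^+ k] = - (2 * eta0)) /\
     (k \in Dset p (2 * p) 1 g -> S.[beta ^+ k] = - (2 * eta1)) /\
     ((k \in twoD p 0 g) || (k \in twoD p 1 g) -> S.[beta ^+ k] = 0)).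
Proof.
move=> p_pr p_odd g_odd g_prim _ _ _ _ _ _ beta_prim S eta0 eta1.
have S0 := S_at_0 p_pr p_odd g_odd g_prim beta_prim.
have Sp := S_at_p p_pr p_odd g_odd g_prim beta_prim.
have SD := S_on_D p_pr p_odd g_odd g_prim beta_prim.
have S2D := S_on_2D p_pr p_odd g_odd g_prim beta_prim.
rewrite /eta0 /eta1 !(eta_sumE p_pr p_odd g_odd g_prim beta_prim) //=.
split=> p_mod k _.
- have two_sq : ((p %% 8 == 3) || (p %% 8 == 5))%N = false by lia.
  split; first by move=> ->.
  split; first by case/orP => [/orP[] /SD | /eqP ->]; rewrite ?two_sq.
  by split=> /S2D; rewrite two_sq.
- have two_nonsq : ((p %% 8 == 3) || (p %% 8 == 5))%N by [].
  do 2 (split; first by move=> ->).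
  by do 2 (split; first by move=> /SD; rewrite two_nonsq); case/orP => /S2D; rewrite two_nonsq.
Qed.
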